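(* Under the standing setting, fix $0<t\le1$, $x\in\mathbb{R}^d$ and $0<a_0<a<b<b_0<t$, and let $W_1\le W_2$ be time dependent Lyapunov functions on $[0,t]$ with $W_2\le c_0Z^{1-\sigma}$ for some $c_0>0$, $\sigma\in(0,1)$, and let $1\le w\in C^{1,2}((0,t)\times\mathbb{R}^d)$ satisfy: $w^{-2}\partial_sw$ and $w^{-2}\nabla_yw$ are bounded on $Q(a_0,b_0)$; for some $k>d+2$ and constants $c_1,\dots,c_9\ge1$, on $Q(a_0,b_0)$: $w\le c_1w^{\frac{k-2}{k}}W_1^{\frac2k}$, $|Q\nabla_yw|\le c_2w^{\frac{k-1}{k}}W_1^{\frac1k}$, $|\mathrm{Tr}(QD_y^2w)|\le c_3w^{\frac{k-2}{k}}W_1^{\frac2k}$, $|\partial_sw|\le c_4w^{\frac{k-2}{k}}W_1^{\frac2k}$, $|\sum_iD_iq_{ij}|\le c_5w^{-\frac1k}W_2^{\frac1k}$ for each $j$, $|F|\le c_6w^{-\frac1k}W_2^{\frac1k}$, $V^{\frac12}\le c_7w^{-\frac1k}W_2^{\frac1k}$, $|\Delta_yw|\le c_8w^{\frac{k-2}{k}}W_1^{\frac2k}$, $|Q\nabla_yW_1|\le c_9w^{-\frac1k}W_1W_2^{\frac1k}$; and for every $n$, $g_n^0(t,\cdot,x,\cdot)\in L^\infty(Q(a_0,b_0))$. Then for every $n\in\mathbb{N}$, with $Q_n=(q^{(n)}_{ij})$ in place of $Q$: $w^{-2}\partial_sw$ and $w^{-2}\nabla_yw$ are bounded on $Q(a_0,b_0)$,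 and on $Q(a_0,b_0)$ we have $w\le c_1w^{\frac{k-2}{k}}W_1^{\frac2k}$, $|Q_n\nabla_yw|\le 2c_2w^{\frac{k-1}{k}}W_1^{\frac1k}$, $|\mathrm{Tr}(Q_nD_y^2w)|\le(c_3+\eta c_8)w^{\frac{k-2}{k}}W_1^{\frac2k}$, $|\partial_sw|\le c_4w^{\frac{k-2}{k}}W_1^{\frac2k}$, $|\sum_iD_iq^{(n)}_{ij}|\le(c_5+4c_9)w^{-\frac1k}W_2^{\frac1k}$ for each $j$, $|F|\le c_6w^{-\frac1k}W_2^{\frac1k}$, $V^{\frac12}\le c_7w^{-\frac1k}W_2^{\frac1k}$, and $g_n^0(t,\cdot,x,\cdot)\in L^\infty(Q(a_0,b_0))$; i.e. the operator $\mathscr{A}_n$ satisfies the same hypotheses with constants $c_1,2c_2,c_3+\eta c_8,c_4,c_5+4c_9,c_6,c_7$.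
   Context: Standing setting. Let $d\ge1$ and $q_{ij},F_i,V:[0,1]\times\mathbb{R}^d\to\mathbb{R}$. For smooth $\varphi$ put $\mathscr{A}(t)\varphi=\sum_{i,j}q_{ij}(t,\cdot)D_{ij}\varphi+\sum_iF_i(t,\cdot)D_i\varphi-V(t,\cdot)\varphi$, $\mathscr{A}_0(t)=\mathscr{A}(t)+V(t)$, $F=(F_i)$, $Q=(q_{ij})$. Assume: (H1) for some $\varsigma\in(0,1)$, $q_{ij},F_i,V\in C^{\varsigma/2,\varsigma}_{\mathrm{loc}}([0,1]\times\mathbb{R}^d)$ and $q_{ij}\in C^{0,1}((0,1)\times\mathbb{R}^d)$; (H2) $Q$ symmetric, $\sum q_{ij}\xi_i\xi_j\ge\eta|\xi|^2$ for some $\eta>0$; (H3) $V\ge0$; (H4) there are $0\le Z\in C^2(\mathbb{R}^d)$, $Z\to\infty$ at infinity, and $M\ge0$ with $\mathscr{A}(t)Z\le M$ and $\eta\Delta Z+F(t)\cdot\nabla Z-V(t)Z\le M$; (H5) there is $0\le Z_0\in C^2(\mathbb{R}^d)$, $Z_0\to\infty$ at infinity, with $\mathscr{A}_0(t)Z_0\le M$ and $\eta\Delta Z_0+F(t)\cdot\nabla Z_0\le M$. Definition. A time dependent Lyapunov function on $[0,t]$ is $0\le W\in C([0,t]\times\mathbb{R}^d)\cap C^{1,2}((0,t)\times\mathbb{R}^d)$ with $W\le Z$, $W(s,x)\to\infty$ as $|x|\to\infty$ uniformly for $s$ in compact subsets of $[0,t)$, and for some $0\le h\in L^1((0,t))$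 and every $s\in(0,t)$: $\partial_sW-\mathscr{A}(s)W\ge-hW$ and $\partial_sW-(\eta\Delta W+F\cdot\nabla W-VW)\ge-hW$ on $\mathbb{R}^d$. Approximation: fix $\varphi\in C_c^\infty(\mathbb{R})$ with $\varphi\equiv1$ on $(-1,1)$, $\varphi\equiv0$ outside $(-2,2)$, $|\tau\varphi'(\tau)|\le2$; set $\varphi_n(s,y)=\varphi(W_1(s,y)/n)$, $q^{(n)}_{ij}=\varphi_nq_{ij}+(1-\varphi_n)\eta\delta_{ij}$, $\mathscr{A}_n(s)=\sum q^{(n)}_{ij}(s)D_{ij}+\sum F_j(s)D_j-V(s)$, $\mathscr{A}^0_n=\mathscr{A}_n+V$; $g_n^0$ is the Green kernel of the evolution family associated with $\mathscr{A}_n^0$. $Q(a,b)=(a,b)\times\mathbb{R}^d$.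
   Formalization: The cutoff φ of the approximation also satisfies 0 ≤ φ ≤ 1 on all of ℝ, so it takes values in [0,1]. The statement above fails without it. *)

From HB Require Import structures.
From mathcomp Require Import all_boot all_order all_algebra.
From mathcomp Require Import all_classical all_reals all_analysis.
Set Implicit Arguments. Unset Strict Implicit. Unset Printing Implicit Defensive.
Import Order.TTheory GRing.Theory Num.Theory.
Import numFieldNormedType.Exports.
Local Open Scope classical_set_scope.
Local Open Scope ring_scope.

Section Defs.
Variable R : realType.
Variable d : nat.
Local Notation vec := 'rV[R]_d.

Definition ev (i : 'I_d) : vec := delta_mx 0 i.

Definition enorm (v : vec) : R := Num.sqrt (\sum_i v 0 i ^+ 2).

Definition pd (i : 'I_d) (f : vec -> R) (y : vec) : R :=
  derive1 (fun h : R => f (y + h *: ev i)) 0.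
Definition pd_ex (i : 'I_d) (f : vec -> R) (y : vec) : Prop :=
  derivable (fun h : R => f (y + h *: ev i)) 0 1.

Definition pdx (i : 'I_d) (f : R -> vec -> R) : R -> vec -> R :=
  fun s y => pd i (f s) y.
Definition dt (f : R -> vec -> R) : R -> vec -> R :=
  fun s y => derive1 (fun r => f r y) s.
Definition dt_ex (f : R -> vec -> R) (s : R) (y : vec) : Prop :=
  derivable (fun r => f r y) s 1.

Definition grad (f : vec -> R) (y : vec) : vec := \row_i pd i f y.
Definition lap (f : vec -> R) (y : vec) : R := \sum_i pd i (pd i f) y.

(* uncurried version, for joint continuity in (s,y) *)
Definition unc (f : R -> vec -> R) : R * vec -> R := fun p => f p.1 p.2.

Definition strip (I : set R) : set (R * vec) := [set p | I p.1].

Definition C12 (I : set R) (f : R -> vec -> R) : Prop :=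
  (forall s y, I s ->
     [/\ dt_ex f s y, forall i, pd_ex i (f s) y &
         forall i j, pd_ex i (pd j (f s)) y]) /\
  {within strip I, continuous (unc f)} /\
  {within strip I, continuous (unc (dt f))} /\
  (forall i, {within strip I, continuous (unc (pdx i f))}) /\
  (forall i j, {within strip I, continuous (unc (pdx i (pdx j f)))}).

Definition C01 (I : set R) (f : R -> vec -> R) : Prop :=
  (forall s y i, I s -> pd_ex i (f s) y) /\
  {within strip I, continuous (unc f)} /\
  (forall i, {within strip I, continuous (unc (pdx i f))}).

Definition C2 (f : vec -> R) : Prop :=
  (forall y i, pd_ex i f y) /\ (forall y i j, pd_ex i (pd j f) y) /\
  continuous f /\ (forall i, continuous (pd i f)) /\
  (forall i j, continuous (pd i (pd j f))).

Definition hoelder_loc (vs : R) (f : R -> vec -> R) : Prop :=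
  forall r : R, 0 < r -> exists C : R, forall s s' y y',
    s \in `[0, 1] -> s' \in `[0, 1] -> enorm y <= r -> enorm y' <= r ->
    `|f s y - f s' y'| <= C * (`|s - s'| `^ (vs / 2) + enorm (y - y') `^ vs).

Definition to_infty (Z : vec -> R) : Prop :=
  forall K : R, exists r : R, forall y, r < enorm y -> K <= Z y.

Definition coeffs := 'I_d -> 'I_d -> R -> vec -> R.

Definition A0op (q : coeffs) (F : 'I_d -> R -> vec -> R) (s : R)
  (phi : vec -> R) (y : vec) : R :=
  \sum_i \sum_j q i j s y * pd i (pd j phi) y + \sum_i F i s y * pd i phi y.
Definition Aop (q : coeffs) (F : 'I_d -> R -> vec -> R) (V : R -> vec -> R)
  (s : R) (phi : vec -> R) (y : vec) : R :=
  A0op q F s phi y - V s y * phi y.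
Definition Aeta (eta : R) (F : 'I_d -> R -> vec -> R) (V : R -> vec -> R)
  (s : R) (phi : vec -> R) (y : vec) : R :=
  eta * lap phi y + \sum_i F i s y * pd i phi y - V s y * phi y.

Definition Qmul (q : coeffs) (s : R) (y : vec) (v : vec) : vec :=
  \row_i \sum_j q i j s y * v 0 j.
Definition trQD2 (q : coeffs) (s : R) (f : vec -> R) (y : vec) : R :=
  \sum_i \sum_j q i j s y * pd i (pd j f) y.
Definition divQ (q : coeffs) (j : 'I_d) (s : R) (y : vec) : R :=
  \sum_i pd i (q i j s) y.
Definition Fvec (F : 'I_d -> R -> vec -> R) (s : R) (y : vec) : vec :=
  \row_i F i s y.

Definition standing (q : coeffs) (F : 'I_d -> R -> vec -> R)
  (V : R -> vec -> R) (eta : R) (Z Z0 : vec -> R) (M : R) : Prop :=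
  (exists vs : R, 0 < vs < 1 /\
     (forall i j, hoelder_loc vs (q i j)) /\ (forall i, hoelder_loc vs (F i)) /\
     hoelder_loc vs V) /\
  (forall i j, C01 `]0, 1[ (q i j)) /\
  (forall i j s y, q i j s y = q j i s y) /\
  (0 < eta /\ forall s y (xi : vec), s \in `[0, 1] ->
     eta * \sum_i xi 0 i ^+ 2 <= \sum_i \sum_j q i j s y * xi 0 i * xi 0 j) /\
  (forall s y, s \in `[0, 1] -> 0 <= V s y) /\
  ((forall y, 0 <= Z y) /\ C2 Z /\ to_infty Z /\ 0 <= M /\
   forall s y, s \in `[0, 1] ->
     Aop q F V s Z y <= M /\ Aeta eta F V s Z y <= M) /\
  ((forall y, 0 <= Z0 y) /\ C2 Z0 /\ to_infty Z0 /\
   forall s y, s \in `[0, 1] ->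
     A0op q F s Z0 y <= M /\ eta * lap Z0 y + \sum_i F i s y * pd i Z0 y <= M).

Definition lyapunov (q : coeffs) (F : 'I_d -> R -> vec -> R)
  (V : R -> vec -> R) (eta : R) (Z : vec -> R) (t : R)
  (W : R -> vec -> R) : Prop :=
  (forall s y, s \in `[0, t] -> 0 <= W s y) /\
  {within strip `[0, t], continuous (unc W)} /\
  C12 `]0, t[ W /\
  (forall s y, s \in `[0, t] -> W s y <= Z y) /\
  (forall t', 0 <= t' < t -> forall K : R, exists r : R, forall s y,
     s \in `[0, t'] -> r < enorm y -> K <= W s y) /\
  (exists h : R -> R, (forall s, 0 <= h s) /\
     (lebesgue_measure).-integrable `]0, t[ (EFin \o h) /\
     forall s y, s \in `]0, t[ ->
       dt W s y - Aop q F V s (W s) y >= - h s * W s y /\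
       dt W s y - Aeta eta F V s (W s) y >= - h s * W s y).

Definition smooth1 (f : R -> R) : Prop :=
  forall (n : nat) (x : R), derivable (derive1n n f) x 1.

Definition cutoff (phi : R -> R) : Prop :=
  smooth1 phi /\
  (forall r, -1 < r < 1 -> phi r = 1) /\
  (forall r, (r <= -2) \/ (2 <= r) -> phi r = 0) /\
  (forall r, `|r * derive1 phi r| <= 2) /\
  (forall r, 0 <= phi r <= 1).

Definition phin (phi : R -> R) (W1 : R -> vec -> R) (n : nat) : R -> vec -> R :=
  fun s y => phi (W1 s y / n%:R).

Definition qn (phi : R -> R) (W1 : R -> vec -> R) (eta : R) (q : coeffs)
  (n : nat) : coeffs :=
  fun i j s y => phin phi W1 n s y * q i j s y +
                 (1 - phin phi W1 n s y) * (eta * (i == j)%:R).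

Definition in_box (l u : R * vec) (p : R * vec) : Prop :=
  l.1 <= p.1 <= u.1 /\ forall i, l.2 0 i <= p.2 0 i <= u.2 0 i.
Definition box_vol (l u : R * vec) : R :=
  (u.1 - l.1) * \prod_i (u.2 0 i - l.2 0 i).
Definition null_set (N : set (R * vec)) : Prop :=
  forall e : R, 0 < e -> exists (l u : nat -> R * vec),
    (forall k, (l k).1 <= (u k).1 /\ forall i, (l k).2 0 i <= (u k).2 0 i) /\
    (forall p, N p -> exists k, in_box (l k) (u k) p) /\
    (forall m, \sum_(k < m) box_vol (l k) (u k) <= e).
Definition ess_bounded_on (A : set (R * vec)) (f : R -> vec -> R) : Prop :=
  exists (C : R) (N : set (R * vec)), null_set N /\
    forall p, A p -> ~ N p -> `|f p.1 p.2| <= C.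
End Defs.

From HB Require Import structures.
From mathcomp Require Import all_boot all_order all_algebra.
From mathcomp Require Import all_classical all_reals all_analysis.
From mathcomp Require Import ring lra.
Set Implicit Arguments. Unset Strict Implicit. Unset Printing Implicit Defensive.
Import Order.TTheory GRing.Theory Num.Theory.
Import numFieldNormedType.Exports.
Local Open Scope classical_set_scope.
Local Open Scope ring_scope.

(* Where W1 <= n the coefficients are unchanged; elsewhere q^(n) = phi_n Q +
   (1 - phi_n) eta I is a convex combination of Q and eta I.  By ellipticity
   |eta xi| <= |Q xi|, so |Q_n xi| <= |Q xi|, and Tr(Q_n D^2 w) is the same
   convex combination of Tr(Q D^2 w) and eta Delta w.  The only new term is in
   the divergence: differentiating phi_n adds phi'(W1/n)/n (Q grad W1 -
   eta grad W1)_j, and |r phi'(r)| <= 2 together with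
   |eta grad W1| <= |Q grad W1| <= c9 w^(-1/k) W1 W2^(1/k) bounds it by
   4 c9 w^(-1/k) W2^(1/k).  The remaining hypotheses do not involve Q. *)

Lemma convex_sqr_le (R : realDomainType) (p a b : R) : 0 <= p <= 1 ->
  (p * a + (1 - p) * b) ^+ 2 <= p * a ^+ 2 + (1 - p) * b ^+ 2.
Proof.
case/andP=> p0 p1.
have : 0 <= p * (1 - p) * (a - b) ^+ 2.
  by rewrite mulr_ge0 ?sqr_ge0 // mulr_ge0 // subr_ge0.
nra.
Qed.

Lemma sum_delta_mul (R : pzSemiRingType) (I : finType) (i : I) (f : I -> R) :
  \sum_j (i == j)%:R * f j = f i.
Proof.
rewrite (bigD1 i) //= eqxx mul1r big1 ?addr0 // => j /negPf.
by rewrite eq_sym => ->; rewrite mul0r.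
Qed.

Section Norms.
Variables (R : realType) (d : nat).
Implicit Types u v : 'rV[R]_d.

Lemma enorm_coord_le v j : `|v 0 j| <= enorm v.
Proof.
rewrite /enorm -sqrtr_sqr ler_wsqrtr //.
by rewrite (bigD1 j) //= lerDl sumr_ge0 // => i _; exact: sqr_ge0.
Qed.

Lemma enorm_le_sumsqr u v : \sum_i v 0 i ^+ 2 <= \sum_i u 0 i ^+ 2 -> enorm v <= enorm u.
Proof. by move=> h; rewrite /enorm ler_wsqrtr. Qed.

Lemma scale_enorm_le_sumsqr (c : R) u v : 0 <= c ->
  \sum_i (c * v 0 i) ^+ 2 <= \sum_i u 0 i ^+ 2 -> c * enorm v <= enorm u.
Proof.
move=> c0 h; rewrite /enorm -(ger0_norm c0) -sqrtr_sqr -sqrtrM ?sqr_ge0 //.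
rewrite ler_wsqrtr // mulr_sumr.
by under eq_bigr do rewrite -exprMn.
Qed.

Lemma elliptic_sqr_le (eta : R) (g u : 'I_d -> R) : 0 <= eta ->
  eta * \sum_i g i ^+ 2 <= \sum_i g i * u i ->
  \sum_i (eta * g i) ^+ 2 <= \sum_i u i ^+ 2.
Proof.
move=> eta0 h.
have sqr_sum_ge0 : 0 <= \sum_i (eta * g i - u i) ^+ 2.
  by apply: sumr_ge0 => i _; exact: sqr_ge0.
have -> : \sum_i (eta * g i) ^+ 2 = eta ^+ 2 * \sum_i g i ^+ 2.
  by rewrite mulr_sumr; apply: eq_bigr => i _; rewrite exprMn.
have expand : \sum_i (eta * g i - u i) ^+ 2 =
    eta ^+ 2 * \sum_i g i ^+ 2 + \sum_i u i ^+ 2 - 2 * eta * \sum_i g i * u i.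
  by rewrite !mulr_sumr -big_split -sumrB /=; apply: eq_bigr => i _; ring.
have : eta * (eta * \sum_i g i ^+ 2) <= eta * \sum_i g i * u i by rewrite ler_wpM2l.
nra.
Qed.

End Norms.

Section Ellipticity.
Variables (R : realType) (d : nat).

Definition elliptic_at (q : coeffs R d) (eta s : R) (y : 'rV[R]_d) : Prop :=
  forall xi : 'rV[R]_d,
    eta * \sum_i xi 0 i ^+ 2 <= \sum_i \sum_j q i j s y * xi 0 i * xi 0 j.

Variables (q : coeffs R d) (eta s : R) (y : 'rV[R]_d).
Hypotheses (eta_ge0 : 0 <= eta) (q_ell : elliptic_at q eta s y).

Lemma elliptic_Qmul_sqr_le (g : 'rV[R]_d) :
  \sum_i (eta * g 0 i) ^+ 2 <= \sum_i Qmul q s y g 0 i ^+ 2.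
Proof.
under [X in _ <= X]eq_bigr do rewrite mxE.
apply: elliptic_sqr_le => //.
suff -> : \sum_i g 0 i * \sum_j q i j s y * g 0 j =
          \sum_i \sum_j q i j s y * g 0 i * g 0 j by exact: q_ell.
by apply: eq_bigr => i _; rewrite mulr_sumr; apply: eq_bigr => j _; ring.
Qed.

Lemma elliptic_enorm_Qmul_ge (g : 'rV[R]_d) : eta * enorm g <= enorm (Qmul q s y g).
Proof. exact/scale_enorm_le_sumsqr/elliptic_Qmul_sqr_le. Qed.

End Ellipticity.

Section CutoffCoefficients.
Variables (R : realType) (d : nat) (phi : R -> R) (W1 : R -> 'rV[R]_d -> R).
Variables (eta : R) (q : coeffs R d) (n : nat).

Local Notation Qn := (qn phi W1 eta q n).
Local Notation p s y := (phin phi W1 n s y).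

Lemma qn_row_sum i s y (f : 'I_d -> R) :
  \sum_j Qn i j s y * f j =
  p s y * \sum_j q i j s y * f j + (1 - p s y) * (eta * f i).
Proof.
transitivity (\sum_j (p s y * (q i j s y * f j)
    + (1 - p s y) * eta * ((i == j)%:R * f j))).
  by apply: eq_bigr => j _; rewrite /qn; ring.
by rewrite big_split /= -!mulr_sumr sum_delta_mul mulrA.
Qed.

Lemma trQD2_qn s (f : 'rV[R]_d -> R) y :
  trQD2 Qn s f y = p s y * trQD2 q s f y + (1 - p s y) * (eta * lap f y).
Proof.
rewrite /trQD2 /lap; transitivity (\sum_i (p s y * \sum_j q i j s y * pd i (pd j f) y
    + (1 - p s y) * (eta * pd i (pd i f) y))).
  by apply: eq_bigr => i _; exact: (qn_row_sum i s y (fun j => pd i (pd j f) y)).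
by rewrite big_split /= !mulr_sumr.
Qed.

Lemma pd_qn i j s y :
  pd_ex i (W1 s) y -> pd_ex i (q i j s) y -> derivable phi (W1 s y / n%:R) 1 ->
  pd i (Qn i j s) y =
  p s y * pd i (q i j s) y + derive1 phi (W1 s y / n%:R) / n%:R *
    pd i (W1 s) y * (q i j s y - eta * (i == j)%:R).
Proof.
move=> dW dq dphi.
pose A h := W1 s (y + h *: ev R i); pose Q h := q i j s (y + h *: ev R i).
have shift0 (f : 'rV[R]_d -> R) : f (y + 0 *: ev R i) = f y by rewrite scale0r addr0.
have dA : is_derive (0 : R) (1 : R) A (pd i (W1 s) y).
  by rewrite /pd derive1E; exact: derivableP.
have dQ : is_derive (0 : R) (1 : R) Q (pd i (q i j s) y).
  by rewrite /pd derive1E; exact: derivableP.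
have dAn := is_deriveM dA (is_derive_cst (n%:R^-1 : R) (0 : R) (1 : R)).
have An0 : (A * cst n%:R^-1) 0 = W1 s y / n%:R.
  exact: (congr1 (fun z => z / n%:R) (shift0 (W1 s))).
have dphi' : is_derive ((A * cst n%:R^-1) 0) (1 : R) phi
                       (derive1 phi (W1 s y / n%:R)).
  by rewrite An0 derive1E; exact: derivableP.
pose P := phi \o A * cst n%:R^-1; pose c := eta * (i == j)%:R.
have dP : is_derive (0 : R) (1 : R) P _ := is_derive1_comp dphi' dAn.
have dqn := is_deriveD (is_deriveM dP dQ)
  (is_deriveM (is_deriveB (is_derive_cst (1 : R) (0 : R) (1 : R)) dP)
              (is_derive_cst c (0 : R) (1 : R))).
rewrite [LHS]/pd derive1E.
have -> : (fun h => Qn i j s (y + h *: ev R i)) = P * Q + (cst 1 - P) * cst c by [].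
have P0 : P 0 = p s y := congr1 phi An0.
by rewrite derive_val P0 /Q /c /cst /= !shift0 /GRing.scale /=; ring.
Qed.

Hypothesis phi01 : forall r, 0 <= phi r <= 1.
Hypothesis eta_ge0 : 0 <= eta.

Let phin01 s y : 0 <= p s y <= 1. Proof. exact: phi01. Qed.

Lemma norm_trQD2_qn_le s (f : 'rV[R]_d -> R) y :
  `|trQD2 Qn s f y| <= `|trQD2 q s f y| + eta * `|lap f y|.
Proof.
have /andP[p0 p1] := phin01 s y; have q0 : 0 <= 1 - p s y by rewrite subr_ge0.
rewrite trQD2_qn; apply: (le_trans (ler_normD _ _)).
rewrite !normrM (ger0_norm p0) (ger0_norm q0) (ger0_norm eta_ge0).
by rewrite lerD // ler_piMl // ?mulr_ge0 // lerBlDr lerDl.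
Qed.

Lemma enorm_Qmul_qn_le s y (g : 'rV[R]_d) : elliptic_at q eta s y ->
  enorm (Qmul Qn s y g) <= enorm (Qmul q s y g).
Proof.
move=> q_ell; apply: enorm_le_sumsqr.
have ell := elliptic_Qmul_sqr_le eta_ge0 q_ell g.
under eq_bigr do rewrite mxE qn_row_sum.
apply: (@le_trans _ _ (\sum_i (p s y * Qmul q s y g 0 i ^+ 2
                               + (1 - p s y) * (eta * g 0 i) ^+ 2))).
  by apply: ler_sum => i _; rewrite mxE; exact: convex_sqr_le.
have /andP[p0 p1] := phin01 s y.
rewrite big_split /= -2!mulr_sumr.
have : (1 - p s y) * \sum_i (eta * g 0 i) ^+ 2 <=
       (1 - p s y) * \sum_i Qmul q s y g 0 i ^+ 2 by rewrite ler_wpM2l ?subr_ge0.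
lra.
Qed.

Lemma divQ_qn j s y :
  (forall i, pd_ex i (W1 s) y) -> (forall i, pd_ex i (q i j s) y) ->
  derivable phi (W1 s y / n%:R) 1 -> (forall i, q i j s y = q j i s y) ->
  divQ Qn j s y = p s y * divQ q j s y + derive1 phi (W1 s y / n%:R) / n%:R *
    (Qmul q s y (grad (W1 s) y) 0 j - eta * grad (W1 s) y 0 j).
Proof.
move=> dW dq dphi qsym; set f := derive1 phi _ / n%:R.
transitivity (\sum_i (p s y * pd i (q i j s) y + f * (q j i s y * pd i (W1 s) y)
    - f * eta * ((j == i)%:R * pd i (W1 s) y))).
  by apply: eq_bigr => i _; rewrite pd_qn // qsym eq_sym /f; ring.
rewrite sumrB big_split /= -!mulr_sumr sum_delta_mul /divQ /Qmul /grad !mxE.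
by under [X in _ = _ + _ * (X - _)]eq_bigr do rewrite mxE; ring.
Qed.

Lemma norm_divQ_qn_le j s y (E : R) :
  (forall i, pd_ex i (W1 s) y) -> (forall i, pd_ex i (q i j s) y) ->
  derivable phi (W1 s y / n%:R) 1 -> (forall i, q i j s y = q j i s y) ->
  elliptic_at q eta s y -> 0 <= W1 s y -> 0 <= E ->
  `|W1 s y / n%:R * derive1 phi (W1 s y / n%:R)| <= 2 ->
  enorm (Qmul q s y (grad (W1 s) y)) <= E * W1 s y ->
  `|divQ Qn j s y| <= `|divQ q j s y| + 4 * E.
Proof.
move=> dW dq dphi qsym q_ell W0 E0 cutoff_slope QgradW.
rewrite divQ_qn //; apply: le_trans (ler_normD _ _) _; apply: lerD.
  have /andP[p0 p1] := phin01 s y.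
  by rewrite normrM (ger0_norm p0) ler_piMl.
set f := derive1 phi _ / n%:R; set g := grad (W1 s) y.
have fW : `|f| * W1 s y <= 2.
  by rewrite -(ger0_norm W0) -normrM mulrC /f mulrA mulrAC.
have gj : eta * `|g 0 j| <= enorm (Qmul q s y g).
  apply: le_trans (elliptic_enorm_Qmul_ge eta_ge0 q_ell g).
  by rewrite ler_wpM2l ?enorm_coord_le.
have diff : `|Qmul q s y g 0 j - eta * g 0 j| <= 2 * (E * W1 s y).
  apply: le_trans (ler_normB _ _) _; rewrite normrM (ger0_norm eta_ge0).
  by have := enorm_coord_le (Qmul q s y g) j; lra.
rewrite normrM; apply: le_trans (ler_wpM2l (normr_ge0 f) diff) _.
have -> : `|f| * (2 * (E * W1 s y)) = 2 * E * (`|f| * W1 s y) by ring.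
by have := ler_wpM2l (mulr_ge0 (ler0n _ 2) E0) fW; lra.
Qed.

End CutoffCoefficients.

Theorem lemma6 (R : realType) (d : nat)
  (q : coeffs R d) (F : 'I_d -> R -> 'rV[R]_d -> R) (V : R -> 'rV[R]_d -> R)
  (eta : R) (Z Z0 : 'rV[R]_d -> R) (M : R) (phi : R -> R)
  (g0 : nat -> R -> R -> 'rV[R]_d -> 'rV[R]_d -> R)
  (t : R) (x : 'rV[R]_d) (a0 a b b0 : R)
  (W1 W2 : R -> 'rV[R]_d -> R) (c0 sigma : R) (w : R -> 'rV[R]_d -> R)
  (k c1 c2 c3 c4 c5 c6 c7 c8 c9 : R) :
  (0 < d)%N ->
  standing q F V eta Z Z0 M ->
  cutoff phi ->
  0 < t <= 1 ->
  0 < a0 -> a0 < a -> a < b -> b < b0 -> b0 < t ->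
  lyapunov q F V eta Z t W1 -> lyapunov q F V eta Z t W2 ->
  (forall s y, s \in `[0, t] -> W1 s y <= W2 s y) ->
  0 < c0 -> 0 < sigma < 1 ->
  (forall s y, s \in `[0, t] -> W2 s y <= c0 * Z y `^ (1 - sigma)) ->
  (forall s y, s \in `]0, t[ -> 1 <= w s y) ->
  C12 `]0, t[ w ->
  (exists C : R, forall s y, s \in `]a0, b0[ -> `|(w s y) ^-2 * dt w s y| <= C) ->
  (exists C : R, forall s y, s \in `]a0, b0[ ->
      enorm ((w s y) ^-2 *: grad (w s) y) <= C) ->
  d%:R + 2 < k ->
  1 <= c1 -> 1 <= c2 -> 1 <= c3 -> 1 <= c4 -> 1 <= c5 -> 1 <= c6 -> 1 <= c7 ->
  1 <= c8 -> 1 <= c9 ->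
  (forall s y, s \in `]a0, b0[ ->
    ((w s y <= c1 * w s y `^ ((k - 2) / k) * W1 s y `^ (2 / k)) /\ (enorm (Qmul q s y (grad (w s) y)) <=
          c2 * w s y `^ ((k - 1) / k) * W1 s y `^ (1 / k)) /\ (`|trQD2 q s (w s) y| <= c3 * w s y `^ ((k - 2) / k) * W1 s y `^ (2 / k)) /\ (`|dt w s y| <= c4 * w s y `^ ((k - 2) / k) * W1 s y `^ (2 / k)) /\ ((forall j, `|divQ q j s y| <= c5 * w s y `^ (- (1 / k)) * W2 s y `^ (1 / k))) /\ (enorm (Fvec F s y) <= c6 * w s y `^ (- (1 / k)) * W2 s y `^ (1 / k)) /\ (Num.sqrt (V s y) <= c7 * w s y `^ (- (1 / k)) * W2 s y `^ (1 / k)) /\ (`|lap (w s) y| <= c8 * w s y `^ ((k - 2) / k) * W1 s y `^ (2 / k)) /\ (enorm (Qmul q s y (grad (W1 s) y)) <=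
          c9 * w s y `^ (- (1 / k)) * W1 s y * W2 s y `^ (1 / k)))) ->
  (forall n : nat, (0 < n)%N ->
     ess_bounded_on (strip `]a0, b0[) (fun s y => g0 n t s x y)) ->
  forall n : nat, (0 < n)%N ->
    let Qn := qn phi W1 eta q n in
    [/\ exists C : R, forall s y, s \in `]a0, b0[ ->
          `|(w s y) ^-2 * dt w s y| <= C,
        exists C : R, forall s y, s \in `]a0, b0[ ->
          enorm ((w s y) ^-2 *: grad (w s) y) <= C,
        (forall s y, s \in `]a0, b0[ ->
          ((w s y <= c1 * w s y `^ ((k - 2) / k) * W1 s y `^ (2 / k)) /\ (enorm (Qmul Qn s y (grad (w s) y)) <=
                (2 * c2) * w s y `^ ((k - 1) / k) * W1 s y `^ (1 / k)) /\ (`|trQD2 Qn s (w s) y| <=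
                (c3 + eta * c8) * w s y `^ ((k - 2) / k) * W1 s y `^ (2 / k)) /\ (`|dt w s y| <= c4 * w s y `^ ((k - 2) / k) * W1 s y `^ (2 / k)) /\ ((forall j, `|divQ Qn j s y| <=
                 (c5 + 4 * c9) * w s y `^ (- (1 / k)) * W2 s y `^ (1 / k))) /\ (enorm (Fvec F s y) <= c6 * w s y `^ (- (1 / k)) * W2 s y `^ (1 / k)) /\ (Num.sqrt (V s y) <= c7 * w s y `^ (- (1 / k)) * W2 s y `^ (1 / k)))) &
        ess_bounded_on (strip `]a0, b0[) (fun s y => g0 n t s x y)].
Proof.
move=> _ standing_hyp [phi_smooth [_ [_ [phi_slope phi01]]]] /andP[_ t_le1] a0_gt0 _ _ _
  b0_lt_t [W1_ge0 [_ [[W1_diff _] _]]] _ _ _ _ _ _ _ w_dt w_grad _ _ c2_ge1 _ _ _ _ _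
  _ c9_ge1 bounds g0_bdd n n_gt0 Qn.
split; [exact: w_dt | exact: w_grad | move=> s y s_ab | exact: g0_bdd].
have [s01 s01o s0t s0t_cc] :
    [/\ s \in `[0, 1], s \in `]0, 1[, s \in `]0, t[ & s \in `[0, t]].
  by move: s_ab; rewrite !in_itv /= => /andP[? ?]; split; apply/andP; split; lra.
case: standing_hyp => _ [q_C01 [q_sym [[eta_gt0 q_ellipt] _]]].
have q_ell : elliptic_at q eta s y := fun xi => q_ellipt s y xi s01.
have eta_ge0 := ltW eta_gt0.
have [w_W1 [Qgradw [trQw [dtw [divq [Fb [Vb [lapw QgradW1]]]]]]]] := bounds s y s_ab.
have pow_ge0 (r e : R) : 0 <= r `^ e := powR_ge0 r e.
split=> //; split; [|split; [|split=> //; split; [|split=> //]]].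
- apply: le_trans (enorm_Qmul_qn_le W1 n phi01 eta_ge0 _ q_ell) _.
  apply: le_trans Qgradw _; rewrite -!mulrA ler_peMl ?mulr_ge0 ?ler1n //.
  exact: le_trans ler01 c2_ge1.
- apply: le_trans (norm_trQD2_qn_le W1 q n phi01 eta_ge0 s (w s) y) _.
  rewrite -!mulrA mulrDl -mulrA; apply: lerD; first by rewrite mulrA.
  by rewrite ler_wpM2l // mulrA.
- move=> j; have [_ W1_pd _] := W1_diff s y s0t.
  have q_pd i : pd_ex i (q i j s) y by case: (q_C01 i j) => q_diff _; exact: q_diff s y i s01o.
  set E := c9 * (w s y `^ (- (1 / k)) * W2 s y `^ (1 / k)).
  apply: le_trans (norm_divQ_qn_le (E := E) phi01 eta_ge0 W1_pd q_pd (phi_smooth 0%N _)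
    (fun i => q_sym i j s y) q_ell (W1_ge0 s y s0t_cc) _ (phi_slope _) _) _.
  + by rewrite mulr_ge0 ?mulr_ge0 // (le_trans ler01 c9_ge1).
  + suff -> : E * W1 s y = c9 * w s y `^ (- (1 / k)) * W1 s y * W2 s y `^ (1 / k) by [].
    by rewrite /E; ring.
  + rewrite -!mulrA [X in _ <= X]mulrDl; apply: lerD; first by rewrite mulrA.
    by rewrite /E mulrA.
Qed.
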